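(* The five families of test equations for polycyclic presentations are irredundant: for each $t\in\{1,2,3,4,5\}$ there exists a polycyclic presentation for which some test equation of type (T$t$) fails while all test equations of the other four types hold, where the types are (T1) $c(g_j\,g^{a_{j,k}}\,g_i)=c(g_kg_jg_i)$ for $k>j>i$; (T2) $c(g_j^{r_j}g_i)=c(g^{e_j}g_i)$ for $r_j<\infty$, $j>i$; (T3) $c(g_jg_i^{r_i})=c(g_j\,g^{e_i})$ for $r_i<\infty$, $j>i$; (T4) $c(g_jg_i^{-1}g_i)=c(g_j)$ for $r_i=\infty$, $j>i$; (T5) $c(g_i^{r_i+1})=c(g_i\,g^{e_i})$ for $r_i<\infty$. In particular, no proper subset of these families suffices to detect inconsistency in general.
   Context: A polycyclic presentation $\mathcal P$ on generators $g_1,\ldots,g_n$ consists of $r_1,\ldots,r_n\in\mathbb N\cup\{\infty\}$ and integers $e_{i,k},a_{i,j,k},b_{i,j,k}$ ($1\le i<j\le n$, $1\le k\le n$) with $0\le e_{i,k},a_{i,j,k},b_{i,j,k}<r_k$ whenever $r_k<\infty$, and has defining relations $g_i^{r_i}=g^{e_i}$ (for $r_i<\infty$), $g_jg_i=g_ig^{a_{i,j}}$ (for $i<j$), $g_jg_i^{-1}=g_i^{-1}g^{b_{i,j}}$ (for $i<j$, $r_i=\infty$), where $g^{e_i}=g_{i+1}^{e_{i,i+1}}\cdots g_n^{e_{i,n}}$, $g^{a_{i,j}}=g_{i+1}^{a_{i,j,i+1}}\cdots g_n^{a_{i,j,n}}$, $g^{b_{i,j}}=g_{i+1}^{b_{i,j,i+1}}\cdots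 g_n^{b_{i,j,n}}$ (with $g_k^x$ for $x<0$ meaning $(g_k^{-1})^{|x|}$). From the presentation one computes integers $c_{i,j,k},d_{i,j,k},f_{i,k}$ (in $[0,r_k)$ when $r_k<\infty$) such that in the presented group $g_j^{-1}g_i=g_ig^{c_{i,j}}$ ($i<j$, $r_j=\infty$), $g_j^{-1}g_i^{-1}=g_i^{-1}g^{d_{i,j}}$ ($i<j$, $r_i=r_j=\infty$), $g_i^{-1}=g_i^{r_i-1}g^{f_i}$ ($r_i<\infty$). Let $M$ be the free monoid on $\{g_1^{\pm1},\ldots,g_n^{\pm1}\}$. A collection step replaces a subword equal to the left-hand side of one of these six kinds of relations by its right-hand side, or deletes $g_ig_i^{-1}$ or $g_i^{-1}g_i$; a word admitting no step is reduced. The collection-to-the-left algorithm applies steps, always choosing the leftmost occurrence of a non-reduced subword involving a generator of smallest index (lower index has priority), until the word is reduced; $c\colon M\to M$ maps a word to the result. A presentation is consistent if every element of the presented group is represented by exactly one reduced word. *)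

From Stdlib Require Import ZArith List Arith Bool.
Import ListNotations.
Open Scope nat_scope.

(* Generators are indexed 0 .. n-1 (paper: 1 .. n). *)
Record pcp := Pcp {
  pn : nat;
  pr : nat -> option nat;            (* relative orders: None = infinity *)
  pe : nat -> nat -> Z;              (* pe i k = e_{i,k} *)
  pa : nat -> nat -> nat -> Z;       (* pa i j k = a_{i,j,k} *)
  pb : nat -> nat -> nat -> Z        (* pb i j k = b_{i,j,k} *)
}.

Definition is_inf (P : pcp) (i : nat) : bool :=
  match pr P i with None => true | Some _ => false end.

Definition fin_range (P : pcp) (k : nat) (x : Z) : Prop :=
  match pr P k with Some m => (0 <= x < Z.of_nat m)%Z | None => True end.

Definition pcp_wf (P : pcp) : Prop :=
  (forall i m, i < pn P -> pr P i = Some m -> 0 < m) /\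
  (forall i k, i < k < pn P -> fin_range P k (pe P i k)) /\
  (forall i j k, i < j < pn P -> i < k < pn P ->
      fin_range P k (pa P i j k) /\ fin_range P k (pb P i j k)).

Inductive letter := Pos (i : nat) | Neg (i : nat).
Definition letter_eq_dec (x y : letter) : {x = y} + {x <> y}.
Proof. decide equality; apply Nat.eq_dec. Defined.
Definition word := list letter.

Definition inv_letter (x : letter) : letter :=
  match x with Pos i => Neg i | Neg i => Pos i end.
Definition inv_word (w : word) : word := rev (map inv_letter w).

Definition gen_pow (k : nat) (x : Z) : word :=
  if (0 <=? x)%Z then repeat (Pos k) (Z.to_nat x)
  else repeat (Neg k) (Z.to_nat (- x)).

(* g^v = g_{i+1}^{v_{i+1}} ... g_n^{v_n} *)
Definition gvec (P : pcp) (i : nat) (v : nat -> Z) : word :=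
  flat_map (fun k => gen_pow k (v k)) (seq (S i) (pn P - S i)).

(* A candidate rewriting at the head of a word:
   (smallest generator index involved, length of the left-hand side, right-hand side).
   C i j = c_{i,j}, D i j = d_{i,j}, F i = f_i. Candidates are listed in priority order
   (free cancellations first). *)
Definition cand := (nat * nat * word)%type.

Definition head_cands (P : pcp) (C D : nat -> nat -> nat -> Z) (F : nat -> nat -> Z)
  (w : word) : list cand :=
  match w with
  | [] => []
  | x :: w' =>
    let two :=
      match w' with
      | [] => []
      | y :: _ =>
        match x, y with
        | Pos j, Neg i =>
            if j =? i then [(i, 2, [])]
            else if (i <? j) && is_inf P i then [(i, 2, Neg i :: gvec P i (pb P i j))]
            else []
        | Neg j, Pos i =>
            if j =? i then [(i, 2, [])]
            else if (i <? j) && is_inf P j then [(i, 2, Pos i :: gvec P i (C i j))]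
            else []
        | Pos j, Pos i =>
            if i <? j then [(i, 2, Pos i :: gvec P i (pa P i j))] else []
        | Neg j, Neg i =>
            if (i <? j) && is_inf P i && is_inf P j
            then [(i, 2, Neg i :: gvec P i (D i j))] else []
        end
      end in
    let one :=
      match x with
      | Pos i =>
          match pr P i with
          | Some m => if list_eq_dec letter_eq_dec (firstn m w) (repeat (Pos i) m)
                      then [(i, m, gvec P i (pe P i))] else []
          | None => []
          end
      | Neg i =>
          match pr P i with
          | Some m => [(i, 1, repeat (Pos i) (m - 1) ++ gvec P i (F i))]
          | None => []
          end
      end in
    two ++ one
  end.

(* all candidates: (index, position, length, rhs) *)
Fixpoint cands P C D F (w : word) (p : nat) : list (nat * nat * nat * word) :=
  match w with
  | [] => []
  | _ :: w' => map (fun '(i, l, r) => (i, p, l, r)) (head_cands P C D F w)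
               ++ cands P C D F w' (S p)
  end.

(* smallest generator index first, then leftmost, then priority *)
Fixpoint best (l : list (nat * nat * nat * word)) : option (nat * nat * nat * word) :=
  match l with
  | [] => None
  | q :: l' =>
    match best l' with
    | None => Some q
    | Some q' => let '(i, _, _, _) := q in let '(i', _, _, _) := q' in
                 if i' <? i then Some q' else Some q
    end
  end.

Definition step P C D F (w : word) : option word :=
  match best (cands P C D F w 0) with
  | None => None
  | Some (_, p, l, rhs) => Some (firstn p w ++ rhs ++ skipn (p + l) w)
  end.

Definition reduced P C D F (w : word) : Prop := step P C D F w = None.

Fixpoint run P C D F (fuel : nat) (w : word) : option word :=
  match fuel with
  | 0 => None
  | S k => match step P C D F w with
           | None => Some w
           | Some w2 => run P C D F k w2
           end
  end.

(* c(w) = w' : collection to the left terminates on w with result w' *)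
Definition collects P C D F (w w' : word) : Prop :=
  exists fuel, run P C D F fuel w = Some w'.

(* c_{i,j}, d_{i,j}, f_i as computed from the presentation by collection:
   g^{c_{i,j}} = c((g^{a_{i,j}})^{-1}), g^{d_{i,j}} = c((g^{b_{i,j}})^{-1}),
   g^{f_i} = c((g^{e_i})^{-1}). *)
Definition derived (P : pcp) C D F : Prop :=
  (forall i j, i < j < pn P -> pr P j = None ->
     collects P C D F (inv_word (gvec P i (pa P i j))) (gvec P i (C i j)) /\
     (forall k, i < k < pn P -> fin_range P k (C i j k))) /\
  (forall i j, i < j < pn P -> pr P i = None -> pr P j = None ->
     collects P C D F (inv_word (gvec P i (pb P i j))) (gvec P i (D i j)) /\
     (forall k, i < k < pn P -> fin_range P k (D i j k))) /\
  (forall i m, i < pn P -> pr P i = Some m ->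
     collects P C D F (inv_word (gvec P i (pe P i))) (gvec P i (F i)) /\
     (forall k, i < k < pn P -> fin_range P k (F i k))).

Definition test_eq (P : pcp) (t : nat) (u v : word) : Prop :=
  match t with
  | 1 => exists i j k, i < j /\ j < k /\ k < pn P /\
           u = Pos j :: gvec P j (pa P j k) ++ [Pos i] /\ v = [Pos k; Pos j; Pos i]
  | 2 => exists i j m, i < j < pn P /\ pr P j = Some m /\
           u = repeat (Pos j) m ++ [Pos i] /\ v = gvec P j (pe P j) ++ [Pos i]
  | 3 => exists i j m, i < j < pn P /\ pr P i = Some m /\
           u = Pos j :: repeat (Pos i) m /\ v = Pos j :: gvec P i (pe P i)
  | 4 => exists i j, i < j < pn P /\ pr P i = None /\
           u = [Pos j; Neg i; Pos i] /\ v = [Pos j]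
  | 5 => exists i m, i < pn P /\ pr P i = Some m /\
           u = repeat (Pos i) (m + 1) /\ v = Pos i :: gvec P i (pe P i)
  | _ => False
  end.

Definition eq_holds P C D F (u v : word) : Prop :=
  exists w, collects P C D F u w /\ collects P C D F v w.

Definition eq_fails P C D F (u v : word) : Prop :=
  exists w1 w2, collects P C D F u w1 /\ collects P C D F v w2 /\ w1 <> w2.

From Stdlib Require Import ZArith List Bool Lia.
Import ListNotations.

(* Each witness is a presentation on at most four generators in which a single relation
   conflicts with the others in a way that only one family of test equations detects.
   For a fixed finite presentation every claim of the theorem is a finite computation
   (well-formedness, the derived exponents c, d, f, and the collected forms of the finitely
   many test equations), so the claims are packaged as boolean checks proved sound and the
   witnesses are certified by evaluation. *)

Definition word_eqb (u v : word) : bool :=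
  if list_eq_dec letter_eq_dec u v then true else false.

Lemma word_eqb_spec (u v : word) : word_eqb u v = true <-> u = v.
Proof. unfold word_eqb; destruct (list_eq_dec letter_eq_dec u v); split; congruence. Qed.

Definition pairs_below (n : nat) : list (nat * nat) :=
  flat_map (fun j => map (fun i => (i, j)) (seq 0 j)) (seq 0 n).

Lemma in_pairs_below (n i j : nat) : In (i, j) (pairs_below n) <-> i < j < n.
Proof.
  unfold pairs_below; rewrite in_flat_map; split.
  - intros (j' & Hj' & Hin); apply in_map_iff in Hin as (i' & [= <- <-] & Hi').
    apply in_seq in Hj', Hi'; lia.
  - intros Hij; exists j; split; [apply in_seq; lia|].
    apply in_map_iff; exists i; split; [reflexivity | apply in_seq; lia].
Qed.

Definition triples_below (n : nat) : list (nat * nat * nat) :=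
  flat_map (fun '(j, k) => map (fun i => (i, j, k)) (seq 0 j)) (pairs_below n).

Lemma in_triples_below (n i j k : nat) :
  In (i, j, k) (triples_below n) <-> i < j /\ j < k /\ k < n.
Proof.
  unfold triples_below; rewrite in_flat_map; split.
  - intros ([j' k'] & Hjk & Hin); apply in_pairs_below in Hjk.
    apply in_map_iff in Hin as (i' & [= <- <- <-] & Hi'); apply in_seq in Hi'; lia.
  - intros Hijk; exists (j, k); split; [apply in_pairs_below; lia|].
    apply in_map_iff; exists i; split; [reflexivity | apply in_seq; lia].
Qed.

Definition test_eqs (P : pcp) (t : nat) : list (word * word) :=
  match t with
  | 1 => map (fun '(i, j, k) => (Pos j :: gvec P j (pa P j k) ++ [Pos i], [Pos k; Pos j; Pos i]))
             (triples_below (pn P))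
  | 2 => flat_map (fun '(i, j) => match pr P j with
           | Some m => [(repeat (Pos j) m ++ [Pos i], gvec P j (pe P j) ++ [Pos i])]
           | None => [] end) (pairs_below (pn P))
  | 3 => flat_map (fun '(i, j) => match pr P i with
           | Some m => [(Pos j :: repeat (Pos i) m, Pos j :: gvec P i (pe P i))]
           | None => [] end) (pairs_below (pn P))
  | 4 => flat_map (fun '(i, j) => match pr P i with
           | Some _ => []
           | None => [([Pos j; Neg i; Pos i], [Pos j])] end) (pairs_below (pn P))
  | 5 => flat_map (fun i => match pr P i with
           | Some m => [(repeat (Pos i) (m + 1), Pos i :: gvec P i (pe P i))]
           | None => [] end) (seq 0 (pn P))
  | _ => []
  end.

Lemma in_test_eqs (P : pcp) (t : nat) (u v : word) :
  In (u, v) (test_eqs P t) <-> test_eq P t u v.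
Proof.
  destruct t as [|[|[|[|[|[|t]]]]]]; cbn [test_eqs test_eq]; try tauto.
  - rewrite in_map_iff; split.
    + intros ([[i j] k] & [= <- <-] & Hijk); apply in_triples_below in Hijk.
      exists i, j, k; tauto.
    + intros (i & j & k & Hij & Hjk & Hk & -> & ->); exists (i, j, k).
      split; [reflexivity | apply in_triples_below; tauto].
  - rewrite in_flat_map; split.
    + intros ([i j] & Hij & Hin); apply in_pairs_below in Hij.
      destruct (pr P j) as [m|] eqn:Hm; [|contradiction].
      destruct Hin as [[= <- <-]|[]]; exists i, j, m; tauto.
    + intros (i & j & m & Hij & Hm & -> & ->); exists (i, j).
      rewrite in_pairs_below, Hm; split; [tauto | now left].
  - rewrite in_flat_map; split.
    + intros ([i j] & Hij & Hin); apply in_pairs_below in Hij.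
      destruct (pr P i) as [m|] eqn:Hm; [|contradiction].
      destruct Hin as [[= <- <-]|[]]; exists i, j, m; tauto.
    + intros (i & j & m & Hij & Hm & -> & ->); exists (i, j).
      rewrite in_pairs_below, Hm; split; [tauto | now left].
  - rewrite in_flat_map; split.
    + intros ([i j] & Hij & Hin); apply in_pairs_below in Hij.
      destruct (pr P i) eqn:Hm; [contradiction|].
      destruct Hin as [[= <- <-]|[]]; exists i, j; tauto.
    + intros (i & j & Hij & Hm & -> & ->); exists (i, j).
      rewrite in_pairs_below, Hm; split; [tauto | now left].
  - rewrite in_flat_map; split.
    + intros (i & Hi & Hin); apply in_seq in Hi.
      destruct (pr P i) as [m|] eqn:Hm; [|contradiction].
      destruct Hin as [[= <- <-]|[]]; exists i, m; repeat split; auto; lia.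
    + intros (i & m & Hi & Hm & -> & ->); exists i.
      rewrite in_seq, Hm; split; [lia | now left].
Qed.

Definition fin_rangeb (P : pcp) (k : nat) (x : Z) : bool :=
  match pr P k with Some m => (0 <=? x)%Z && (x <? Z.of_nat m)%Z | None => true end.

Lemma fin_rangeb_sound (P : pcp) (k : nat) (x : Z) :
  fin_rangeb P k x = true -> fin_range P k x.
Proof.
  unfold fin_rangeb, fin_range; destruct (pr P k); [|auto].
  rewrite andb_true_iff, Z.leb_le, Z.ltb_lt; tauto.
Qed.

Definition exponents_in_range (P : pcp) (i : nat) (v : nat -> Z) : bool :=
  forallb (fun k => fin_rangeb P k (v k)) (seq (S i) (pn P - S i)).

Lemma exponents_in_range_sound (P : pcp) (i : nat) (v : nat -> Z) :
  exponents_in_range P i v = true -> forall k, i < k < pn P -> fin_range P k (v k).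
Proof.
  unfold exponents_in_range; rewrite forallb_forall; intros Hv k Hk.
  apply fin_rangeb_sound, Hv, in_seq; lia.
Qed.

Definition pcp_wfb (P : pcp) : bool :=
  forallb (fun i => match pr P i with Some m => 0 <? m | None => true end) (seq 0 (pn P)) &&
  forallb (fun i => exponents_in_range P i (pe P i)) (seq 0 (pn P)) &&
  forallb (fun '(i, j) => exponents_in_range P i (pa P i j) && exponents_in_range P i (pb P i j))
    (pairs_below (pn P)).

Lemma pcp_wfb_sound (P : pcp) : pcp_wfb P = true -> pcp_wf P.
Proof.
  unfold pcp_wfb; rewrite !andb_true_iff, !forallb_forall.
  intros [[Hr He] Hab]; split; [|split].
  - intros i m Hi Hm; specialize (Hr i); rewrite Hm, Nat.ltb_lt in Hr; apply Hr, in_seq; lia.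
  - intros i k Hik; apply (exponents_in_range_sound P i); [apply He, in_seq; lia | lia].
  - intros i j k Hij Hik.
    specialize (Hab (i, j) (proj2 (in_pairs_below _ _ _) Hij)); apply andb_true_iff in Hab.
    split; apply (exponents_in_range_sound P i); tauto.
Qed.

Section Collection.

Variables (P : pcp) (C D : nat -> nat -> nat -> Z) (F : nat -> nat -> Z) (fuel : nat).

Definition collectsb (u v : word) : bool :=
  match run P C D F fuel u with Some w => word_eqb w v | None => false end.

Lemma collectsb_sound (u v : word) : collectsb u v = true -> collects P C D F u v.
Proof.
  unfold collectsb; destruct (run P C D F fuel u) as [w|] eqn:Hrun; [|discriminate].
  intros ->%word_eqb_spec; now exists fuel.
Qed.

Definition derived_exponent_ok (i : nat) (v w : nat -> Z) : bool :=
  collectsb (inv_word (gvec P i v)) (gvec P i w) && exponents_in_range P i w.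

Lemma derived_exponent_ok_sound (i : nat) (v w : nat -> Z) :
  derived_exponent_ok i v w = true ->
  collects P C D F (inv_word (gvec P i v)) (gvec P i w) /\
  (forall k, i < k < pn P -> fin_range P k (w k)).
Proof.
  unfold derived_exponent_ok; rewrite andb_true_iff; intros [Hc Hr].
  split; [now apply collectsb_sound | now apply exponents_in_range_sound].
Qed.

Definition derivedb : bool :=
  forallb (fun '(i, j) =>
      (negb (is_inf P j) || derived_exponent_ok i (pa P i j) (C i j)) &&
      (negb (is_inf P i && is_inf P j) || derived_exponent_ok i (pb P i j) (D i j)))
    (pairs_below (pn P)) &&
  forallb (fun i => is_inf P i || derived_exponent_ok i (pe P i) (F i)) (seq 0 (pn P)).

Lemma derivedb_sound : derivedb = true -> derived P C D F.
Proof.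
  unfold derivedb, is_inf; rewrite andb_true_iff, !forallb_forall; intros [Hcd Hf].
  split; [|split].
  - intros i j Hij Hj; apply derived_exponent_ok_sound.
    specialize (Hcd (i, j) (proj2 (in_pairs_below _ _ _) Hij)); cbv beta iota in Hcd.
    rewrite Hj in Hcd.
    now apply andb_true_iff in Hcd as [? _].
  - intros i j Hij Hi Hj; apply derived_exponent_ok_sound.
    specialize (Hcd (i, j) (proj2 (in_pairs_below _ _ _) Hij)); cbv beta iota in Hcd.
    rewrite Hi, Hj in Hcd.
    now apply andb_true_iff in Hcd as [_ ?].
  - intros i m Hi Hm; apply derived_exponent_ok_sound.
    specialize (Hf i (proj2 (in_seq _ _ _) (conj (Nat.le_0_l i) Hi))); now rewrite Hm in Hf.
Qed.

Definition compare_collected (u v : word) : option bool :=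
  match run P C D F fuel u, run P C D F fuel v with
  | Some w1, Some w2 => Some (word_eqb w1 w2)
  | _, _ => None
  end.

Lemma compare_collected_true (u v : word) :
  compare_collected u v = Some true -> eq_holds P C D F u v.
Proof.
  unfold compare_collected.
  destruct (run P C D F fuel u) as [w1|] eqn:H1, (run P C D F fuel v) as [w2|] eqn:H2;
    try discriminate.
  intros [= <-%word_eqb_spec]; exists w1; split; now exists fuel.
Qed.

Lemma compare_collected_false (u v : word) :
  compare_collected u v = Some false -> eq_fails P C D F u v.
Proof.
  unfold compare_collected.
  destruct (run P C D F fuel u) as [w1|] eqn:H1, (run P C D F fuel v) as [w2|] eqn:H2;
    try discriminate.
  intros [= Hne]; exists w1, w2; split; [now exists fuel | split; [now exists fuel|]].
  intros <-; rewrite (proj2 (word_eqb_spec w1 w1) eq_refl) in Hne; discriminate.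
Qed.

Definition only_type_fails (t : nat) : bool :=
  existsb (fun '(u, v) => match compare_collected u v with Some false => true | _ => false end)
    (test_eqs P t) &&
  forallb (fun t' => (t' =? t) ||
      forallb (fun '(u, v) => match compare_collected u v with Some b => b | None => false end)
        (test_eqs P t'))
    (seq 1 5).

Lemma only_type_fails_sound (t : nat) : only_type_fails t = true ->
  (exists u v, test_eq P t u v /\ eq_fails P C D F u v) /\
  (forall t' u v, 1 <= t' <= 5 -> t' <> t -> test_eq P t' u v -> eq_holds P C D F u v).
Proof.
  unfold only_type_fails; rewrite andb_true_iff, existsb_exists, forallb_forall.
  intros [([u v] & Huv & Hfail) Hhold]; split.
  - exists u, v; split; [now apply in_test_eqs|].
    apply compare_collected_false; destruct (compare_collected u v) as [[]|]; congruence.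
  - intros t' u' v' Ht' Hne Htest.
    specialize (Hhold t' (proj2 (in_seq 5 1 t') ltac:(lia))).
    apply Nat.eqb_neq in Hne; rewrite Hne in Hhold; cbn [orb] in Hhold.
    rewrite forallb_forall in Hhold.
    specialize (Hhold (u', v') (proj2 (in_test_eqs _ _ _ _) Htest)); cbv beta iota in Hhold.
    apply compare_collected_true; destruct (compare_collected u' v') as [[]|]; congruence.
Qed.

End Collection.

Definition irredundance_witness (P : pcp) (C D : nat -> nat -> nat -> Z) (F : nat -> nat -> Z)
  (fuel t : nat) : bool :=
  pcp_wfb P && derivedb P C D F fuel && only_type_fails P C D F fuel t.

Lemma irredundance_witness_sound (P : pcp) (C D : nat -> nat -> nat -> Z) (F : nat -> nat -> Z)
  (fuel t : nat) :
  irredundance_witness P C D F fuel t = true ->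
  pcp_wf P /\ derived P C D F /\
  (exists u v, test_eq P t u v /\ eq_fails P C D F u v) /\
  (forall t' u v, 1 <= t' <= 5 -> t' <> t -> test_eq P t' u v -> eq_holds P C D F u v).
Proof.
  unfold irredundance_witness; rewrite !andb_true_iff; intros [[Hwf Hder] Honly].
  split; [now apply pcp_wfb_sound | split; [now apply (derivedb_sound _ _ _ _ fuel) |]].
  now apply (only_type_fails_sound _ _ _ _ fuel).
Qed.

Definition sparse2 (l : list (nat * nat * Z)) (i k : nat) : Z :=
  match find (fun '(i', k', _) => (i' =? i) && (k' =? k)) l with
  | Some (_, _, x) => x
  | None => 0%Z
  end.

Definition sparse3 (l : list (nat * nat * nat * Z)) (i j k : nat) : Z :=
  match find (fun '(i', j', k', _) => (i' =? i) && (j' =? j) && (k' =? k)) l with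
  | Some (_, _, _, x) => x
  | None => 0%Z
  end.

Definition presentation (rs : list (option nat)) (e : list (nat * nat * Z))
  (a b : list (nat * nat * nat * Z)) : pcp :=
  Pcp (length rs) (fun i => nth i rs None) (sparse2 e) (sparse3 a) (sparse3 b).

(* g0 swaps g1 and g2 and centralises g3, yet g2 g1 = g1 g2 g3;
   conjugating by g0 gives g3 = g3^-1. *)
Definition P1 : pcp :=
  presentation [Some 2; Some 3; Some 3; Some 3] []
    [(0, 1, 2, 1%Z); (0, 2, 1, 1%Z); (0, 3, 3, 1%Z);
     (1, 2, 2, 1%Z); (1, 2, 3, 1%Z); (1, 3, 3, 1%Z); (2, 3, 3, 1%Z)] [].

(* Conjugation by g0 swaps g1 and g1^2 = g2, so g1 = g2^2 = 1. *)
Definition P2 : pcp :=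
  presentation [Some 2; Some 2; Some 2] [(1, 2, 1%Z)]
    [(0, 1, 2, 1%Z); (0, 2, 1, 1%Z); (1, 2, 2, 1%Z)] [].

(* Conjugation by the involution g0 squares g1, so g1^4 = g1 although g1 has infinite order. *)
Definition P3 : pcp := presentation [Some 2; None] [] [(0, 1, 1, 2%Z)] [].

(* The relation g1 g0^-1 = g0^-1 forces g1 = 1. *)
Definition P4 : pcp := presentation [None; Some 2] [] [(0, 1, 1, 1%Z)] [].

(* g0 inverts g1 = g0^2. *)
Definition P5 : pcp := presentation [Some 2; Some 3] [(0, 1, 1%Z)] [(0, 1, 1, 2%Z)] [].

Theorem proposition18 :
  forall t : nat, 1 <= t <= 5 ->
  exists (P : pcp) (C D : nat -> nat -> nat -> Z) (F : nat -> nat -> Z),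
    pcp_wf P /\ derived P C D F /\
    (exists u v, test_eq P t u v /\ eq_fails P C D F u v) /\
    (forall t' u v, 1 <= t' <= 5 -> t' <> t -> test_eq P t' u v ->
       eq_holds P C D F u v).
Proof.
  intros t Ht.
  destruct t as [|[|[|[|[|[|t]]]]]]; try (exfalso; lia);
    [ exists P1, (sparse3 []), (sparse3 []), (sparse2 [])
    | exists P2, (sparse3 []), (sparse3 []), (sparse2 [(1, 2, 1%Z)])
    | exists P3, (sparse3 [(0, 1, 1, (-2)%Z)]), (sparse3 []), (sparse2 [])
    | exists P4, (sparse3 []), (sparse3 []), (sparse2 [])
    | exists P5, (sparse3 []), (sparse3 []), (sparse2 [(0, 1, 2%Z)]) ];
    apply (irredundance_witness_sound _ _ _ _ 100); vm_compute; reflexivity.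
Qed.
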